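(* Let $L$ be a finite set of horizontal line segments in an axis-parallel rectangle $R$ of height $h$, let $\rho>0$, and let $S_1,\dots,S_t$, $t=\lceil h/(\sqrt3\rho)\rceil$, be the horizontal strips of $R$ of width $\sqrt3\rho$. Let $Q_j$ and $Z_j$ ($j=1,\dots,t$) be the output point set and the number of iterations of the strip-greedy procedure described in the context, applied to strip $S_j$. Then (a) $\bigcup_{j=1}^t Q_j$ covers every segment of $L$ and $\left|\bigcup_{j=1}^t Q_j\right| \le 6\,OPT_h$, and (b) $\frac13\sum_{j=1}^t Z_j \le OPT_h$, where $OPT_h$ is the minimum number of sensors of range $\rho$ needed to cover all segments of $L$.
   Context: A sensor at point $s$ with range $\rho$ covers a segment $\ell$ if $\operatorname{dist}(s,\ell)\le\rho$; the hippodrome $H(\ell,\rho)$ is the set of points at distance at most $\rho$ from $\ell$. Write $R=[x_0,x_m]\times[y_0,y_0+h]$ and $S_i = R\cap\{y_0+(i-1)\sqrt3\rho \le y < y_0+i\sqrt3\rho\}$ (the last strip closed at the top); each horizontal segment lies in exactly one strip, and $L_i$ denotes the segments of $L$ lying in $S_i$. Strip-greedy procedure for $S_i$: set $Q_i=\emptyset$ and repeat while $L_i\neq\emptyset$: let $\ell_1\in L_i$ be the segment whose right endpoint $v_1$ has the smallest $x$-coordinate; let $L_i^1$ be the set of segments of $L_i$ whose hippodromes intersect $H(\ell_1,\rho)$ (i.e. at distance at most $2\rho$ from $\ell_1$); let $C$ be the $2\rho\times\sqrt3\rho$ rectangle inside $S_i$ (spanning the strip vertically) whose left side lies on the vertical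 line through $v_1$; split $C$ into two $\rho\times\sqrt3\rho$ rectangles and add their two centers to $Q_i$ (each of these rectangles is contained in the disk of radius $\rho$ about its center); delete $L_i^1\cup\{\ell_1\}$ from $L_i$. $Z_i$ is the number of iterations performed, so $|Q_i|=2Z_i$. *)

From Stdlib Require Import Reals Lra List.
Import ListNotations.
Open Scope R_scope.

Definition point : Type := (R * R)%type.

(* A horizontal segment {(x, sy) | sxl <= x <= sxr}. *)
Record hseg : Type := HSeg { sy : R; sxl : R; sxr : R }.

(* Euclidean distance from point p to the (closed) horizontal segment l
   (assuming sxl l <= sxr l): the nearest point of l is obtained by clamping
   the x-coordinate into [sxl l, sxr l]. *)
Definition dist_pt_seg (p : point) (l : hseg) : R :=
  let cx := Rmax (sxl l) (Rmin (fst p) (sxr l)) in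
  sqrt ((fst p - cx) ^ 2 + (snd p - sy l) ^ 2).

Definition covers_seg (rho : R) (s : point) (l : hseg) : Prop :=
  dist_pt_seg s l <= rho.

Definition hippodrome (l : hseg) (rho : R) (p : point) : Prop :=
  dist_pt_seg p l <= rho.

Definition hipp_intersect (rho : R) (l1 l2 : hseg) : Prop :=
  exists p : point, hippodrome l1 rho p /\ hippodrome l2 rho p.

Definition covers_all (rho : R) (P : point -> Prop) (L : list hseg) : Prop :=
  forall l, In l L -> exists s, P s /\ covers_seg rho s l.

Definition is_opt (rho : R) (L : list hseg) (n : nat) : Prop :=
  (exists P : list point, length P = n /\ covers_all rho (fun s => In s P) L) /\
  (forall P : list point, covers_all rho (fun s => In s P) L -> (n <= length P)%nat).

Definition seg_in_rect (x0 xm y0 h : R) (l : hseg) : Prop :=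
  x0 <= sxl l /\ sxl l <= sxr l /\ sxr l <= xm /\ y0 <= sy l /\ sy l <= y0 + h.

(* Segment l (inside R) lies in strip S_i, i in 1..t; the last strip S_t
   is closed at the top (and bounded above by the top of R). *)
Definition in_strip (y0 rho : R) (t i : nat) (l : hseg) : Prop :=
  (1 <= i <= t)%nat /\
  y0 + (INR i - 1) * (sqrt 3 * rho) <= sy l /\
  (sy l < y0 + INR i * (sqrt 3 * rho) \/ i = t).

(* The two centers added in an iteration of the strip-greedy procedure for
   strip S_i, when the chosen segment has right endpoint x-coordinate xr:
   C = [xr, xr + 2 rho] x [y0+(i-1)sqrt3 rho, y0+i sqrt3 rho] is split into
   two rho x sqrt3 rho rectangles, whose centers are returned. *)
Definition center1 (y0 rho : R) (i : nat) (xr : R) : point :=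
  (xr + rho / 2, y0 + (INR i - 1) * (sqrt 3 * rho) + sqrt 3 * rho / 2).
Definition center2 (y0 rho : R) (i : nat) (xr : R) : point :=
  (xr + 3 * rho / 2, y0 + (INR i - 1) * (sqrt 3 * rho) + sqrt 3 * rho / 2).

(* Ties in the choice of l1 may be broken arbitrarily. *)
Inductive greedy_run (y0 rho : R) (i : nat) : list hseg -> list point -> nat -> Prop :=
| greedy_done : forall Li, Li = [] -> greedy_run y0 rho i Li [] 0
| greedy_step : forall Li l1 Li' Q Z,
    In l1 Li ->
    (forall l, In l Li -> sxr l1 <= sxr l) ->
    (forall l, In l Li' <-> (In l Li /\ l <> l1 /\ ~ hipp_intersect rho l l1)) ->
    greedy_run y0 rho i Li' Q Z ->
    greedy_run y0 rho i Li (center1 y0 rho i (sxr l1) :: center2 y0 rho i (sxr l1) :: Q) (S Z).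

Definition card_le (P : point -> Prop) (n : nat) : Prop :=
  exists U : list point, NoDup U /\ (forall p, In p U <-> P p) /\ (length U <= n)%nat.

(* In strip S_j the segments chosen by the greedy procedure have pairwise
   disjoint hippodromes, so a sensor covers at most one of them; a sensor
   covers segments whose heights differ by at most 2 rho < 2 sqrt3 rho, hence
   it serves at most three consecutive strips.  Double counting sensor/strip
   incidences gives sum_j Z_j <= 3 OPT_h.  Every segment deleted together with
   the chosen l_1 has its left end within 2 rho of the right end of l_1, so it
   meets the 2 rho x sqrt3 rho box C, which the two new disks cover; and
   |union Q_j| <= sum_j 2 Z_j <= 6 OPT_h. *)
From Stdlib Require Import Reals List.
From Stdlib Require Import Lra Lia Psatz Classical ClassicalEpsilon.
Import ListNotations.
Open Scope R_scope.

Lemma Rabs_le_sqrt_sum_sq_l u v : Rabs u <= sqrt (u ^ 2 + v ^ 2).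
Proof. rewrite <- sqrt_Rsqr_abs. apply sqrt_le_1_alt. unfold Rsqr. nra. Qed.

Lemma Rabs_le_sqrt_sum_sq_r u v : Rabs v <= sqrt (u ^ 2 + v ^ 2).
Proof. rewrite <- sqrt_Rsqr_abs. apply sqrt_le_1_alt. unfold Rsqr. nra. Qed.

Lemma Rabs_sub_sy_le_dist p l : Rabs (snd p - sy l) <= dist_pt_seg p l.
Proof. apply Rabs_le_sqrt_sum_sq_r. Qed.

Lemma sxl_sub_le_dist p l : sxl l - fst p <= dist_pt_seg p l.
Proof.
  unfold dist_pt_seg; cbv zeta.
  pose proof (Rabs_le_sqrt_sum_sq_l (fst p - Rmax (sxl l) (Rmin (fst p) (sxr l)))
    (snd p - sy l)) as Habs.
  pose proof (Rmax_l (sxl l) (Rmin (fst p) (sxr l))).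
  revert Habs; unfold Rabs; destruct Rcase_abs; lra.
Qed.

Lemma sub_sxr_le_dist p l : sxl l <= sxr l -> fst p - sxr l <= dist_pt_seg p l.
Proof.
  intros Hl. unfold dist_pt_seg; cbv zeta.
  pose proof (Rabs_le_sqrt_sum_sq_l (fst p - Rmax (sxl l) (Rmin (fst p) (sxr l)))
    (snd p - sy l)) as Habs.
  assert (Rmax (sxl l) (Rmin (fst p) (sxr l)) <= sxr l)
    by (apply Rmax_lub; [exact Hl | apply Rmin_r]).
  revert Habs; unfold Rabs; destruct Rcase_abs; lra.
Qed.

Lemma dist_pt_seg_le_of_point p l z rho : 0 <= rho -> sxl l <= z <= sxr l ->
  (fst p - z) ^ 2 + (snd p - sy l) ^ 2 <= rho ^ 2 -> dist_pt_seg p l <= rho.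
Proof.
  intros Hrho Hz Hpz. unfold dist_pt_seg; cbv zeta.
  rewrite <- (sqrt_pow2 rho) by lra. apply sqrt_le_1_alt.
  enough ((fst p - Rmax (sxl l) (Rmin (fst p) (sxr l))) ^ 2 <= (fst p - z) ^ 2) by lra.
  pose proof (pow2_ge_0 (fst p - z)).
  unfold Rmax, Rmin; repeat destruct Rle_dec; rewrite ?Rminus_diag; simpl in *; nra.
Qed.

Lemma hipp_intersect_sym rho a b : hipp_intersect rho a b -> hipp_intersect rho b a.
Proof. intros [p [Ha Hb]]. exists p. tauto. Qed.

Lemma hipp_intersect_sxl_le rho l l1 : sxl l1 <= sxr l1 ->
  hipp_intersect rho l l1 -> sxl l <= sxr l1 + 2 * rho.
Proof.
  intros Hl1 [p [Hl Hp1]]. unfold hippodrome in *.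
  pose proof (sxl_sub_le_dist p l). pose proof (sub_sxr_le_dist p l1 Hl1). lra.
Qed.

Lemma sqrt3_gt_1 : 1 < sqrt 3.
Proof. rewrite <- sqrt_1. apply sqrt_lt_1_alt. lra. Qed.

(* The box C = [xr, xr + 2 rho] x [lo, lo + sqrt3 rho] of the iteration; a
   point of either half is within rho^2/4 + 3 rho^2/4 = rho^2 of its center. *)
Lemma covers_seg_box_center y0 rho i xr l : 0 < rho -> sxl l <= sxr l ->
  xr <= sxr l -> sxl l <= xr + 2 * rho ->
  y0 + (INR i - 1) * (sqrt 3 * rho) <= sy l <=
    y0 + (INR i - 1) * (sqrt 3 * rho) + sqrt 3 * rho ->
  covers_seg rho (center1 y0 rho i xr) l \/ covers_seg rho (center2 y0 rho i xr) l.
Proof.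
  intros Hrho Hl Hxr Hxl Hy. unfold covers_seg, center1, center2.
  set (lo := y0 + (INR i - 1) * (sqrt 3 * rho)) in *.
  assert (Hs : sqrt 3 * sqrt 3 = 3) by (apply sqrt_sqrt; lra).
  pose proof sqrt3_gt_1.
  assert (Hdy : (lo + sqrt 3 * rho / 2 - sy l) ^ 2 <= 3 * rho ^ 2 / 4) by nra.
  set (z := Rmax (sxl l) xr).
  assert (Hz : sxl l <= z <= sxr l /\ xr <= z <= xr + 2 * rho)
    by (unfold z, Rmax; destruct Rle_dec; lra).
  destruct (Rle_dec z (xr + rho)); [left | right];
    apply dist_pt_seg_le_of_point with z; simpl; nra.
Qed.

Lemma no_sensor_covers_strips_three_apart y0 rho t j k p a b : 0 < rho ->
  (j + 3 <= k)%nat -> in_strip y0 rho t j a -> in_strip y0 rho t k b ->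
  covers_seg rho p a -> covers_seg rho p b -> False.
Proof.
  intros Hrho Hjk [Hj [_ Ha]] [Hk [Hb _]] Hpa Hpb.
  destruct Ha as [Ha | ->]; [| lia].
  pose proof (Rabs_sub_sy_le_dist p a) as Hda. pose proof (Rabs_sub_sy_le_dist p b) as Hdb.
  unfold covers_seg in *.
  assert (Hjk' : INR j + 3 <= INR k)
    by (replace 3 with (INR 3) by (simpl; ring); rewrite <- plus_INR; apply le_INR; lia).
  pose proof sqrt3_gt_1.
  assert ((INR j + 2) * (sqrt 3 * rho) <= (INR k - 1) * (sqrt 3 * rho))
    by (apply Rmult_le_compat_r; nra).
  revert Hda Hdb; unfold Rabs; do 2 destruct Rcase_abs; nra.
Qed.

Lemma in_strip_exists y0 rho t l : (1 <= t)%nat -> y0 <= sy l ->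
  exists j, in_strip y0 rho t j l.
Proof.
  intros Ht Hy.
  enough (Hgen : forall m n, (n + m = t)%nat -> (1 <= n)%nat ->
    y0 + (INR n - 1) * (sqrt 3 * rho) <= sy l -> exists j, in_strip y0 rho t j l).
  { apply (Hgen (t - 1)%nat 1%nat); [lia | lia | simpl; lra]. }
  induction m as [| m IH]; intros n Hnm Hn Hyn.
  - exists n. repeat split; auto; lia.
  - destruct (Rlt_dec (sy l) (y0 + INR n * (sqrt 3 * rho))).
    + exists n. repeat split; auto; lia.
    + apply (IH (S n)); [lia | lia | rewrite S_INR; lra].
Qed.

Definition hipp_independent (rho : R) (C : list hseg) : Prop :=
  forall a b, In a C -> In b C -> hipp_intersect rho a b -> a = b.

Section GreedyRun.

Variables (y0 rho : R) (i : nat).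

Lemma greedy_run_length Li Q Z : greedy_run y0 rho i Li Q Z -> length Q = (2 * Z)%nat.
Proof. induction 1; simpl; lia. Qed.

Lemma greedy_run_chosen Li Q Z : greedy_run y0 rho i Li Q Z ->
  exists C, length C = Z /\ incl C Li /\ NoDup C /\ hipp_independent rho C.
Proof.
  induction 1 as [Li _ | Li l1 Li' Q Z Hl1 _ HLi' _ [C [Hlen [HC [Hnd Hind]]]]].
  - exists []. repeat split; try easy. constructor.
  - assert (HCLi' : forall c, In c C -> In c Li /\ c <> l1 /\ ~ hipp_intersect rho c l1)
      by (intros c Hc; apply HLi', HC, Hc).
    exists (l1 :: C). repeat split.
    + simpl; lia.
    + intros c [<- | Hc]; [exact Hl1 | apply HCLi', Hc].
    + constructor; [| exact Hnd].
      intros Hc. destruct (HCLi' l1 Hc) as [_ [Hne _]]. exact (Hne eq_refl).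
    + intros a b [<- | Ha] [<- | Hb] Hab; try reflexivity.
      * destruct (HCLi' b Hb) as [_ [_ Hb']]. exfalso. apply Hb', hipp_intersect_sym, Hab.
      * destruct (HCLi' a Ha) as [_ [_ Ha']]. contradiction.
      * apply Hind; assumption.
Qed.

Hypothesis rho_pos : 0 < rho.

Lemma greedy_run_covers Li Q Z : greedy_run y0 rho i Li Q Z ->
  (forall l, In l Li -> sxl l <= sxr l /\
     y0 + (INR i - 1) * (sqrt 3 * rho) <= sy l <=
       y0 + (INR i - 1) * (sqrt 3 * rho) + sqrt 3 * rho) ->
  forall l, In l Li -> exists p, In p Q /\ covers_seg rho p l.
Proof.
  induction 1 as [Li -> | Li l1 Li' Q Z Hl1 Hmin HLi' _ IH]; intros Hbox l Hl;
    [destruct Hl |].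
  destruct (classic (In l Li')) as [Hl' | Hl'].
  - destruct IH with l as [p [Hp Hcov]];
      [intros l' Hl''; apply Hbox, HLi', Hl'' | exact Hl' |].
    exists p. split; [right; right; exact Hp | exact Hcov].
  - assert (Hgap : sxl l <= sxr l1 + 2 * rho).
    { destruct (Hbox l1 Hl1) as [Hl1w _].
      destruct (classic (l = l1)) as [-> | Hne]; [lra |].
      apply hipp_intersect_sxl_le; [exact Hl1w |].
      apply NNPP. intros Hh. apply Hl', HLi'. tauto. }
    destruct (Hbox l Hl) as [Hlw Hly].
    destruct (covers_seg_box_center y0 rho i (sxr l1) l rho_pos Hlw (Hmin l Hl) Hgap Hly)
      as [Hc | Hc]; eexists; split;
      [left; reflexivity | exact Hc | right; left; reflexivity | exact Hc].
Qed.

End GreedyRun.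

Lemma mod_eq_lt_add m j k : j mod m = k mod m -> (j < k -> j + m <= k)%nat.
Proof.
  intros Hmod Hjk. destruct m as [| m]; [lia |].
  pose proof (Nat.div_mod_eq j (S m)). pose proof (Nat.div_mod_eq k (S m)).
  assert (j / S m < k / S m)%nat by nia.
  nia.
Qed.

Lemma in_flat_map_tag {A} (C : nat -> list A) js j c :
  In (j, c) (flat_map (fun k => map (pair k) (C k)) js) <-> In j js /\ In c (C j).
Proof.
  rewrite in_flat_map. split.
  - intros [k [Hk Hjc]]. apply in_map_iff in Hjc as [d [[= <- <-] Hd]]. tauto.
  - intros [Hj Hc]. exists j. split; [exact Hj | apply in_map, Hc].
Qed.

Lemma NoDup_flat_map_tag {A} (C : nat -> list A) js : NoDup js ->
  (forall j, In j js -> NoDup (C j)) -> NoDup (flat_map (fun j => map (pair j) (C j)) js).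
Proof.
  induction 1 as [| j js Hj _ IH]; intros HC; simpl; [constructor |].
  apply NoDup_app.
  - apply NoDup_map_NoDup_ForallPairs; [intros c d _ _ [= ->]; reflexivity |].
    apply HC. left. reflexivity.
  - apply IH. intros k Hk. apply HC. right. exact Hk.
  - intros [k c] Hkc Hkc'. apply in_map_iff in Hkc as [d [[= <- _] _]].
    apply in_flat_map_tag in Hkc'. tauto.
Qed.

(* Double counting: the tagged items (j, c) map injectively into
   {0, ..., m - 1} x P via (j mod m, f c). *)
Section ModularCounting.

Variables (A B : Type) (m : nat) (C : nat -> list A) (f : A -> B) (P : list B) (js : list nat).

Hypothesis m_pos : (0 < m)%nat.
Hypothesis js_NoDup : NoDup js.
Hypothesis C_NoDup : forall j, In j js -> NoDup (C j).
Hypothesis f_in_P : forall j c, In j js -> In c (C j) -> In (f c) P.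
Hypothesis f_inj_mod : forall j k c d, In j js -> In k js -> In c (C j) -> In d (C k) ->
  j mod m = k mod m -> f c = f d -> j = k /\ c = d.

Lemma sum_length_le_mod_mul : (list_sum (map (fun j => length (C j)) js) <= m * length P)%nat.
Proof.
  set (tagged := flat_map (fun j => map (pair j) (C j)) js).
  set (g := fun jc : nat * A => (fst jc mod m, f (snd jc))).
  assert (Hlen : list_sum (map (fun j => length (C j)) js) = length (map g tagged)).
  { rewrite length_map. unfold tagged. rewrite length_flat_map.
    apply f_equal, map_ext. intros j. symmetry. apply length_map. }
  rewrite Hlen, <- (length_seq m 0), <- length_prod.
  apply NoDup_incl_length.
  - apply NoDup_map_NoDup_ForallPairs; [| apply NoDup_flat_map_tag; assumption].
    intros [j c] [k d] Hjc Hkd Hg. apply in_flat_map_tag in Hjc, Hkd. simpl in *.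
    injection Hg as Hmod Hf.
    destruct (f_inj_mod j k c d) as [-> ->]; tauto.
  - intros y Hy. apply in_map_iff in Hy as [[j c] [<- Hjc]]. apply in_flat_map_tag in Hjc.
    apply in_prod; [| apply (f_in_P j); tauto].
    apply in_seq. pose proof (Nat.mod_upper_bound j m ltac:(lia)). simpl. lia.
Qed.

End ModularCounting.

Section StripGreedy.

Variables (x0 xm y0 h rho : R) (L : list hseg) (t : nat)
  (Q : nat -> list point) (Z : nat -> nat) (Ls : nat -> list hseg) (OPT : nat).

Hypothesis h_pos : 0 < h.
Hypothesis rho_pos : 0 < rho.
Hypothesis L_in_rect : forall l, In l L -> seg_in_rect x0 xm y0 h l.
Hypothesis t_ge_ratio : h / (sqrt 3 * rho) <= INR t.
Hypothesis strip_runs : forall j : nat, (1 <= j <= t)%nat ->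
  (forall l, In l (Ls j) <-> (In l L /\ in_strip y0 rho t j l)) /\
  greedy_run y0 rho j (Ls j) (Q j) (Z j).
Hypothesis OPT_opt : is_opt rho L OPT.

Let union_Q (p : point) : Prop := exists j, (1 <= j <= t)%nat /\ In p (Q j).

Lemma strip_width_pos : 0 < sqrt 3 * rho.
Proof. pose proof sqrt3_gt_1. nra. Qed.

Lemma height_le_strips : h <= INR t * (sqrt 3 * rho).
Proof.
  pose proof strip_width_pos.
  apply Rmult_le_compat_r with (r := sqrt 3 * rho) in t_ge_ratio; [| lra].
  unfold Rdiv in t_ge_ratio. rewrite Rmult_assoc, Rinv_l in t_ge_ratio; lra.
Qed.

Lemma strip_count_pos : (1 <= t)%nat.
Proof. pose proof height_le_strips. destruct t; [simpl in *; lra | lia]. Qed.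

Lemma strip_segment_in_box j l : (1 <= j <= t)%nat -> In l (Ls j) ->
  sxl l <= sxr l /\
  y0 + (INR j - 1) * (sqrt 3 * rho) <= sy l <=
    y0 + (INR j - 1) * (sqrt 3 * rho) + sqrt 3 * rho.
Proof.
  intros Hj Hl. apply (proj1 (strip_runs j Hj)) in Hl as [HlL [_ [Hlo Hhi]]].
  destruct (L_in_rect l HlL) as [_ [Hw [_ [_ Htop]]]].
  pose proof height_le_strips.
  repeat split; [lra | lra |]. destruct Hhi as [Hhi | ->]; lra.
Qed.

Lemma union_Q_covers : covers_all rho union_Q L.
Proof.
  intros l Hl. destruct (L_in_rect l Hl) as [_ [_ [_ [Hy _]]]].
  destruct (in_strip_exists y0 rho t l strip_count_pos Hy) as [j Hjl].
  assert (Hj : (1 <= j <= t)%nat) by apply Hjl.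
  destruct (strip_runs j Hj) as [HLs Hrun].
  destruct (greedy_run_covers y0 rho j rho_pos _ _ _ Hrun
    (fun l' => strip_segment_in_box j l' Hj) l) as [p [Hp Hcov]]; [apply HLs; tauto |].
  exists p. split; [exists j; tauto | exact Hcov].
Qed.

Lemma sum_Z_le_3_OPT : (list_sum (map Z (seq 1 t)) <= 3 * OPT)%nat.
Proof.
  destruct OPT_opt as [[P [HP HPcov]] _]. subst OPT.
  set (chosen j C := length C = Z j /\ incl C (Ls j) /\ NoDup C /\ hipp_independent rho C).
  set (C j := epsilon (inhabits []) (chosen j)).
  assert (HC : forall j, (1 <= j <= t)%nat -> chosen j (C j)).
  { intros j Hj. apply epsilon_spec, (greedy_run_chosen y0 rho j _ _ _ (proj2 (strip_runs j Hj))). }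
  set (f c := epsilon (inhabits (0, 0)) (fun p => In p P /\ covers_seg rho p c)).
  assert (Hf : forall c, In c L -> In (f c) P /\ covers_seg rho (f c) c)
    by (intros c Hc; apply epsilon_spec, HPcov, Hc).
  assert (HCL : forall j c, In j (seq 1 t) -> In c (C j) -> In c L /\ in_strip y0 rho t j c).
  { intros j c Hj Hc. apply in_seq in Hj. apply (strip_runs j ltac:(lia)), (HC j ltac:(lia)), Hc. }
  replace (map Z (seq 1 t)) with (map (fun j => length (C j)) (seq 1 t)).
  2:{ apply map_ext_in. intros j Hj. apply in_seq in Hj. apply (HC j ltac:(lia)). }
  apply sum_length_le_mod_mul with (f := f).
  - lia.
  - apply seq_NoDup.
  - intros j Hj. apply in_seq in Hj. apply (HC j ltac:(lia)).
  - intros j c Hj Hc. apply Hf, (HCL j c Hj Hc).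
  - intros j k c d Hj Hk Hc Hd Hmod Hfcd.
    destruct (HCL j c Hj Hc) as [HcL Hcj]. destruct (HCL k d Hk Hd) as [HdL Hdk].
    destruct (Hf c HcL) as [_ Hpc]. destruct (Hf d HdL) as [_ Hpd]. rewrite Hfcd in Hpc.
    assert (j = k) as <-.
    { destruct (Nat.lt_total j k) as [Hjk | [Hjk | Hjk]]; [| exact Hjk |]; exfalso.
      - apply (no_sensor_covers_strips_three_apart y0 rho t j k (f d) c d); auto.
        apply (mod_eq_lt_add 3); assumption.
      - apply (no_sensor_covers_strips_three_apart y0 rho t k j (f d) d c); auto.
        apply (mod_eq_lt_add 3); auto. }
    split; [reflexivity |].
    apply in_seq in Hj. apply (HC j ltac:(lia)); [exact Hc | exact Hd |].
    exists (f d). split; assumption.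
Qed.

Lemma union_Q_card : card_le union_Q (6 * OPT).
Proof.
  set (Qs := concat (map Q (seq 1 t))).
  exists (nodup (fun p q : point => excluded_middle_informative (p = q)) Qs).
  split; [apply NoDup_nodup | split].
  - intros p. rewrite nodup_In. unfold Qs. rewrite in_concat. split.
    + intros [q [Hq Hp]]. apply in_map_iff in Hq as [j [<- Hj]]. apply in_seq in Hj.
      exists j. split; [lia | exact Hp].
    + intros [j [Hj Hp]]. exists (Q j). split; [apply in_map, in_seq; lia | exact Hp].
  - transitivity (length Qs).
    { apply NoDup_incl_length; [apply NoDup_nodup | intros p; apply nodup_In]. }
    unfold Qs. rewrite length_concat, map_map.
    replace (map (fun j => length (Q j)) (seq 1 t)) with (map (fun j => 2 * Z j)%nat (seq 1 t)).
    2:{ apply map_ext_in. intros j Hj. apply in_seq in Hj.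
        symmetry. apply greedy_run_length with y0 rho j (Ls j), (strip_runs j ltac:(lia)). }
    assert (Hdouble : forall js,
      list_sum (map (fun j => 2 * Z j)%nat js) = (2 * list_sum (map Z js))%nat)
      by (unfold list_sum; induction js; cbn in *; lia).
    rewrite Hdouble. pose proof sum_Z_le_3_OPT. lia.
Qed.

End StripGreedy.

Theorem lemma3 (x0 xm y0 h rho : R) (L : list hseg) (t : nat)
  (Q : nat -> list point) (Z : nat -> nat) (Ls : nat -> list hseg) (OPT : nat) :
  x0 <= xm -> 0 < h -> 0 < rho ->
  (forall l, In l L -> seg_in_rect x0 xm y0 h l) ->
  (* t = ceil (h / (sqrt 3 * rho)) *)
  INR t - 1 < h / (sqrt 3 * rho) <= INR t ->
  (* for every strip, Ls j = L_j and (Q j, Z j) is the output of the procedure *)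
  (forall j : nat, (1 <= j <= t)%nat ->
     (forall l, In l (Ls j) <-> (In l L /\ in_strip y0 rho t j l)) /\
     greedy_run y0 rho j (Ls j) (Q j) (Z j)) ->
  is_opt rho L OPT ->
  (covers_all rho (fun p => exists j, (1 <= j <= t)%nat /\ In p (Q j)) L /\
   card_le (fun p => exists j, (1 <= j <= t)%nat /\ In p (Q j)) (6 * OPT)) /\
  INR (fold_right Nat.add 0%nat (map Z (seq 1 t))) / 3 <= INR OPT.
Proof.
  intros _ Hh Hrho Hrect [_ Ht] Hruns Hopt.
  pose proof (sum_Z_le_3_OPT y0 rho L t Q Z Ls OPT Hrho Hruns Hopt) as HZ.
  split; [split |].
  - exact (union_Q_covers x0 xm y0 h rho L t Q Z Ls Hh Hrho Hrect Ht Hruns).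
  - exact (union_Q_card y0 rho L t Q Z Ls OPT Hrho Hruns Hopt).
  - apply le_INR in HZ.
    rewrite mult_INR in HZ. simpl in HZ. unfold list_sum in HZ. lra.
Qed.
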